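(* Let $d\geq 3$ and $n_1\geq\cdots\geq n_d\geq 2$ be integers. Let $N$ and $M$ be the numbers of vertices and edges of $\textsc{Grid}(n_1,\ldots,n_{d-1})$, let $\tilde f$ be a $Q_{d-1}$-magic vertex labeling of $\textsc{Grid}(n_1,\ldots,n_{d-1})$ with magic sum $S$, and let $\tilde g$ be a $Q_{d-1}$-magic edge labeling of $\textsc{Grid}(n_1,\ldots,n_{d-1})$ with magic sum $S'$. Define $g$ on the edges of $\textsc{Grid}(n_1,\ldots,n_d)$ as follows, writing every edge as $e=\{\mathbf x,\mathbf y\}$ with $\mathbf y=\mathbf x+\mathbf e_i$ for a unique $i\in[d]$ ($\mathbf e_i$ the $i$-th unit vector), and writing $\mathbf x'=(x_1,\ldots,x_{d-1})$, $\mathbf y'=(y_1,\ldots,y_{d-1})$: (i) if $i=d$: $g(e)=\tilde f(\mathbf x')+n_dM+(x_d-1)N$ if $x_1+\cdots+x_{d-1}$ is odd, and $g(e)=\tilde f(\mathbf x')+n_dM+(n_d-1-x_d)N$ if $x_1+\cdots+x_{d-1}$ is even; (ii) if $d$ is odd and $i\leq d-1$, or $d$ is even and $i\leq d-2$: $g(e)=\tilde g(\{\mathbf x',\mathbf y'\})+(x_d-1)M$ if $i$ is odd, and $g(e)=\tilde g(\{\mathbf x',\mathbf y'\})+(n_d-x_d)M$ if $i$ is even; (iii) if $d$ is even and $i=d-1$: $g(e)=\tilde g(\{\mathbf x',\mathbf y'\})+(x_d-1)M$ if $x_1+\cdots+x_{d-2}$ is odd, and $g(e)=\tilde g(\{\mathbf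 x',\mathbf y'\})+(n_d-x_d)M$ if $x_1+\cdots+x_{d-2}$ is even. Then $g$ is a $Q_d$-magic edge labeling of $\textsc{Grid}(n_1,\ldots,n_d)$ with $Q_d$-magic sum $$S+2S'+2^{d-2}(n_d-2)N+2^{d-2}\bigl(2n_d+(d-1)(n_d-1)\bigr)M.$$
   Context: $[k]=\{1,\ldots,k\}$. The grid graph $\textsc{Grid}(n_1,\ldots,n_m)$ has vertex set $[n_1]\times\cdots\times[n_m]$ and edge set $\{\{\mathbf x,\mathbf y\}:\sum_{i=1}^m|x_i-y_i|=1\}$. The $m$-cube $Q_m$ is $\textsc{Grid}(2,\ldots,2)$ ($m$ entries). For graphs $G=(V,E)$ and $H$: a bijection $f:V\to\{1,\ldots,|V|\}$ is an $H$-magic vertex labeling if there is a constant $c$ with $\sum_{v\in V(H')}f(v)=c$ for every subgraph $H'\subseteq G$ isomorphic to $H$; a bijection $g:E\to\{1,\ldots,|E|\}$ is an $H$-magic edge labeling if there is a constant $c'$ with $\sum_{e\in E(H')}g(e)=c'$ for every subgraph $H'\subseteq G$ isomorphic to $H$. The constants $c$, $c'$ are the $H$-magic sums. *)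

From mathcomp Require Import all_boot.
Set Implicit Arguments. Unset Strict Implicit. Unset Printing Implicit Defensive.

(* A simple graph is a finType T with a (symmetric irreflexive) rel e.
   Its edge set: the 2-element sets {x,y} with e x y. *)
Definition edges (T : finType) (e : rel T) : {set {set T}} :=
  [set E : {set T} | [exists x : T, exists y : T, e x y && (E == [set x; y])]].

Definition vlabeling (T : finType) (f : T -> nat) : Prop :=
  injective f /\ forall v, 1 <= f v <= #|T|.

Definition elabeling (T : finType) (e : rel T) (g : {set T} -> nat) : Prop :=
  {in edges e &, injective g} /\ forall E, E \in edges e -> 1 <= g E <= #|edges e|.

(* phi embeds H = (U,h) as a (not necessarily induced) subgraph of G = (T,e);
   subgraphs of G isomorphic to H are exactly the images of such embeddings. *)
Definition embedding (U T : finType) (h : rel U) (e : rel T) (phi : U -> T) : Prop :=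
  injective phi /\ forall u v, h u v -> e (phi u) (phi v).

Definition vmagic (U T : finType) (h : rel U) (e : rel T) (f : T -> nat) (c : nat) : Prop :=
  vlabeling f /\
  forall phi : U -> T, embedding h e phi -> \sum_(u : U) f (phi u) = c.

Definition emagic (U T : finType) (h : rel U) (e : rel T) (g : {set T} -> nat) (c : nat) : Prop :=
  elabeling e g /\
  forall phi : U -> T, embedding h e phi -> \sum_(E in edges h) g (phi @: E) = c.

(* Grid(n_1,...,n_m): n : nat -> nat with n i = n_{i+1}; a vertex x stores
   coordinate x_{i+1} - 1 in 'I_(n i) (0-based storage). *)
Definition grid (n : nat -> nat) (m : nat) : finType :=
  {dffun forall i : 'I_m, 'I_(n i)}.

Definition gadj (n : nat -> nat) (m : nat) : rel (grid n m) :=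
  fun x y => \sum_(i < m) ((x i - y i) + (y i - x i)) == 1.

Definition cube (m : nat) := grid (fun _ => 2) m.
Definition cadj (m : nat) : rel (cube m) := @gadj (fun _ => 2) m.

(* 1-based coordinate x_{j+1} (j : nat, 0 if out of range) *)
Definition xc (n : nat -> nat) (m : nat) (x : grid n m) (j : nat) : nat :=
  odflt 0 (omap (fun i : 'I_m => (nat_of_ord (x i)).+1) (insub j)).

Definition restr (n : nat -> nat) (m : nat) (x : grid n m.+1) : grid n m :=
  finfun (fun i : 'I_m => (x (widen_ord (leqnSn m) i) : 'I_(n i))).

From mathcomp Require Import all_boot zify.
Set Implicit Arguments. Unset Strict Implicit. Unset Printing Implicit Defensive.

(* Every copy of Q_d in a grid is a unit box: following the 4-cycles of the cube, parallel
   cube edges map to grid steps along the same axis in the same direction, so a copy is the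
   box at its lowest corner, up to a symmetry of the cube, and it suffices to check the magic
   sum on boxes.  On a box, the vertical edges carry the f-labels of a copy of Q_{d-1} and the
   horizontal ones, two copies of the g-labels of a copy of Q_{d-1}; the level offsets, which
   depend on x_d and on a parity, add up to a constant because flipping one coordinate of the
   box swaps that parity.  Labels are bijective since they are mixed-radix numerals: vertical
   edges get (f, level) above n_d M, horizontal edges (g, level) below it. *)

Definition coord (n : nat -> nat) (d : nat) (x : grid n d) (i : 'I_d) : nat := x i.

(* With [(j == a) && s] and [(j == a) && ~~ s] the positive and negative parts of a signed
   unit vector e_a, the hypothesis says e_a + e_b = e_c + e_e (signs s, r, t, v), with
   e_a + e_b <> 0 and e_c <> e_a. *)
Lemma signed_units_square (I : eqType) (a b c e : I) (s r t v : bool) :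
  (forall j, ((j == a) && ~~ s) + ((j == b) && ~~ r) + ((j == c) && t) + ((j == e) && v)
           = ((j == a) && s) + ((j == b) && r) + ((j == c) && ~~ t) + ((j == e) && ~~ v)) ->
  ~~ ((b == a) && (r == ~~ s)) -> ~~ ((c == a) && (t == s)) ->
  [/\ e = a, v = s & a != c].
Proof.
move=> h nab nac; move: (h a) (h b) (h c) (h e); clear h; rewrite !eqxx.
case: (eqVneq b a) nab => [->|nba] nab; case: (eqVneq c a) nac => [->|nca] nac;
  case: (eqVneq e a) => [->|nea]; rewrite ?eqxx ?(eq_sym a) ?nba ?nca ?nea //=.
all: try (case: (eqVneq c b) => [->|?]); rewrite ?eqxx //=.
all: try (case: (eqVneq e b) => [->|?]); rewrite ?eqxx //=.
all: try (case: (eqVneq e c) => [->|?]); rewrite ?eqxx //=.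
all: by move: nab nac; case: s r t v => [] [] [] [] //=; rewrite ?eqxx //=; lia.
Qed.

(** * Steps and edges of a grid *)

Section GridSteps.
Variables (n : nat -> nat) (d : nat).
Local Notation G := (grid n d).

Lemma grid_ext (x y : G) : (forall i, coord x i = coord y i) -> x = y.
Proof. by move=> h; apply/ffunP => i; apply/val_inj/h. Qed.

Lemma coord_lt (x : G) i : coord x i < n i.
Proof. exact: ltn_ord. Qed.

(* [gstep x y a s]: y is x moved by one unit along axis a, upwards iff s;
   the sign is kept on the side where it is added, to avoid subtraction. *)
Definition gstep (x y : G) (a : 'I_d) (s : bool) :=
  forall j, coord y j + ((j == a) && ~~ s) = coord x j + ((j == a) && s).

Definition gstepb (x y : G) (a : 'I_d) (s : bool) :=
  [forall j, coord y j + ((j == a) && ~~ s) == coord x j + ((j == a) && s)].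

Lemma gstepP x y a s : reflect (gstep x y a s) (gstepb x y a s).
Proof. by apply: (iffP forallP) => h j; apply/eqP/h. Qed.

Lemma gstep_sym x y a s : gstep x y a s -> gstep y x a (~~ s).
Proof. by move=> h j; move: (h j); rewrite negbK; lia. Qed.

Lemma gstep_axis x y a s : gstep x y a s -> coord y a + ~~ s = coord x a + s.
Proof. by move=> h; move: (h a); rewrite eqxx. Qed.

Lemma gstep_neq x y a s : gstep x y a s -> x != y.
Proof. by move=> /gstep_axis h; apply/eqP => exy; move: h; rewrite exy; case: s => /=; lia. Qed.

Lemma gstep_det x y1 y2 a s : gstep x y1 a s -> gstep x y2 a s -> y1 = y2.
Proof. by move=> h1 h2; apply: grid_ext => j; move: (h1 j) (h2 j); lia. Qed.

Lemma gstep_uniq x y a s b t : gstep x y a s -> gstep x y b t -> a = b /\ s = t.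
Proof.
move=> h1 h2; suff /andP [/eqP -> /eqP ->] : (a == b) && (s == t) by [].
move: (h1 a) (h2 a); rewrite eqxx /=.
case: (eqVneq a b) => [->|_] /=; last by case: s {h1 h2}; lia.
by case: s t {h1 h2} => [] [] /=; lia.
Qed.

Lemma gadjP (x y : G) : gadj x y <-> exists a s, gstep x y a s.
Proof.
have -> : gadj x y = (\sum_(i < d) ((coord x i - coord y i) + (coord y i - coord x i)) == 1)
  by [].
split.
- move=> /eqP hs.
  have [a ha] : exists a : 'I_d, 0 < (coord x a - coord y a) + (coord y a - coord x a).
    apply/existsP; apply: contraT; rewrite negb_exists => /forallP h0.
    by move: hs; rewrite big1 // => i _; move: (h0 i); lia.
  rewrite (bigD1 a) //= in hs.
  have [ha1 hrest] : ((coord x a - coord y a) + (coord y a - coord x a) = 1) /\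
     \sum_(i < d | i != a) ((coord x i - coord y i) + (coord y i - coord x i)) = 0.
    by move: hs ha; set r := bigop _ _ _; clearbody r; lia.
  move/eqP: hrest; rewrite sum_nat_eq0 => /forallP hrest.
  exists a, (coord x a < coord y a) => j.
  case: (eqVneq j a) => [->|hj] /=.
    by case: (ltnP (coord x a) (coord y a)) => /= ?; lia.
  by move: (hrest j); rewrite hj /= => /eqP; lia.
- case=> a [s h]; rewrite (bigD1 a) //= big1.
    by move: (h a); rewrite eqxx /=; case: s {h} => /=; lia.
  by move=> i hi; move: (h i); rewrite (negbTE hi) /=; lia.
Qed.

(* Both paths p0 -> p1 -> p2 and p0 -> p3 -> p2 have the same total displacement. *)
Lemma gstep_square p0 p1 p2 p3 a s b r c t e v :
  gstep p0 p1 a s -> gstep p1 p2 b r -> gstep p0 p3 c t -> gstep p3 p2 e v ->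
  p0 != p2 -> p1 != p3 -> [/\ e = a, v = s & a != c].
Proof.
move=> h01 h12 h03 h32 n02 n13; apply: (@signed_units_square _ a b c e s r t v).
- by move=> j; move: (h01 j) (h12 j) (h03 j) (h32 j); lia.
- apply: contra n02 => /andP [/eqP eba /eqP ers]; subst b r.
  by rewrite (gstep_det h12 (gstep_sym h01)).
- apply: contra n13 => /andP [/eqP eca /eqP ets]; subst c t.
  by rewrite (gstep_det h01 h03).
Qed.

Definition grid_of (dflt : G) (f : 'I_d -> nat) : G :=
  @finfun _ (fun j : 'I_d => 'I_(n j)) (fun j => insubd (dflt j) (f j)).

Lemma coord_grid_of (dflt : G) (f : 'I_d -> nat) j : f j < n j -> coord (grid_of dflt f) j = f j.
Proof. by move=> h; rewrite /coord /grid_of ffunE val_insubd h. Qed.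

Definition gsucc (x : G) (k : 'I_d) : G := grid_of x (fun j => coord x j + (j == k)).

Lemma coord_gsucc (x : G) k j : coord x k + 1 < n k -> coord (gsucc x k) j = coord x j + (j == k).
Proof.
move=> h; rewrite coord_grid_of //; case: (eqVneq j k) => [->|_]; first by [].
by rewrite addn0 coord_lt.
Qed.

Lemma gstep_gsucc x k : coord x k + 1 < n k -> gstep x (gsucc x k) k true.
Proof. by move=> h j; rewrite coord_gsucc //= andbF; lia. Qed.

Lemma gstep_lt x y k : gstep x y k true -> coord x k + 1 < n k.
Proof. by move=> /gstep_axis h; move: (coord_lt y k); rewrite /= in h; lia. Qed.

Lemma gstep_gsuccE x y k : gstep x y k true -> y = gsucc x k.
Proof. by move=> h; apply: gstep_det h (gstep_gsucc (gstep_lt h)). Qed.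

Lemma grid_edgesP E :
  E \in edges (@gadj n d) <-> exists x y k, gstep x y k true /\ E = [set x; y].
Proof.
rewrite /edges inE; split.
- case/existsP => x /existsP [y /andP [/gadjP [a [s h]] /eqP ->]].
  case: s h => h; first by exists x, y, a.
  by exists y, x, a; split; [exact: (gstep_sym h) | rewrite setUC].
- case=> x [y [k [h ->]]]; apply/existsP; exists x; apply/existsP; exists y.
  by rewrite eqxx andbT; apply/gadjP; exists k, true.
Qed.

Lemma grid_edge_inj x y k x' y' k' : gstep x y k true -> gstep x' y' k' true ->
  [set x; y] = [set x'; y'] -> [/\ x = x', y = y' & k = k'].
Proof.
move=> h h' e.
have : x \in [set x'; y'] by rewrite -e !inE eqxx.
have : y \in [set x'; y'] by rewrite -e !inE eqxx orbT.
rewrite !inE => /orP [/eqP eyx' | /eqP eyy'] /orP [/eqP exx' | /eqP exy'].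
- by move: (gstep_neq h); rewrite eyx' exx' eqxx.
- by subst; move: (h k) (h' k); rewrite eqxx /=; case: (k == k') => /=; lia.
- by subst; case: (gstep_uniq h h').
- by move: (gstep_neq h); rewrite eyy' exy' eqxx.
Qed.

Lemma big_grid_edges (F : {set G} -> nat) :
  \sum_(E in edges (@gadj n d)) F E =
  \sum_(k < d) \sum_(x : G | coord x k + 1 < n k) F [set x; gsucc x k].
Proof.
pose P := [set p : 'I_d * G | coord p.2 p.1 + 1 < n p.1].
pose h := fun p : 'I_d * G => [set p.2; gsucc p.2 p.1].
have -> : edges (@gadj n d) = h @: P.
  apply/setP => E; apply/idP/idP.
    move/grid_edgesP => [x [y [k [hs ->]]]]; apply/imsetP; exists (k, x).
      by rewrite inE /=; exact: gstep_lt hs.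
    by rewrite /h /= -(gstep_gsuccE hs).
  case/imsetP => [[k x]]; rewrite inE /= => hk ->; apply/grid_edgesP.
  by exists x, (gsucc x k), k; split => //; exact: gstep_gsucc.
rewrite big_imset /=; first by rewrite pair_big_dep /=; apply: eq_bigl => p; rewrite inE.
move=> [k x] [k' x']; rewrite !inE /= => hk hk' e.
by case: (grid_edge_inj (gstep_gsucc hk) (gstep_gsucc hk') e) => -> _ ->.
Qed.

End GridSteps.

Definition ccoord (d : nat) (u : cube d) (i : 'I_d) : nat := @coord (fun _ => 2) d u i.

Lemma ccoord_lt d (u : cube d) i : ccoord u i < 2.
Proof. exact: (@coord_lt (fun _ => 2) d u i). Qed.

Section CubeInduction.
Variable d : nat.

Lemma cube_ext (u v : cube d) : (forall j, ccoord u j = ccoord v j) -> u = v.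
Proof. exact: (@grid_ext (fun _ => 2)). Qed.

Definition cube0 : cube d := [ffun _ => ord0].

Lemma ccoord0 j : ccoord cube0 j = 0.
Proof. by rewrite /ccoord /coord ffunE. Qed.

Definition csucc (u : cube d) k := @gsucc (fun _ => 2) d u k.

Lemma ccoord_csucc u k j : ccoord u k = 0 -> ccoord (csucc u k) j = ccoord u j + (j == k).
Proof. by move=> h; rewrite /ccoord /csucc coord_gsucc // -/(ccoord u k) h. Qed.

Lemma gstep_csucc u k : ccoord u k = 0 -> @gstep (fun _ => 2) d u (csucc u k) k true.
Proof. by move=> h; apply: gstep_gsucc; rewrite -/(ccoord u k) h. Qed.

Lemma cadj_csucc u k : ccoord u k = 0 -> cadj u (csucc u k).
Proof. by move=> h; apply/gadjP; exists k, true; apply: gstep_csucc. Qed.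

Lemma csuccC u i j : ccoord u i = 0 -> ccoord u j = 0 -> i != j ->
  csucc (csucc u i) j = csucc (csucc u j) i.
Proof.
move=> hi hj hij; apply: cube_ext => l.
have h1 : ccoord (csucc u i) j = 0 by rewrite ccoord_csucc // eq_sym (negbTE hij) addn0.
have h2 : ccoord (csucc u j) i = 0 by rewrite ccoord_csucc // (negbTE hij) addn0.
by rewrite (ccoord_csucc _ h1) (ccoord_csucc _ h2) !ccoord_csucc //; lia.
Qed.

Definition cclear (u : cube d) k : cube d :=
  @grid_of (fun _ => 2) d u (fun j => ccoord u j - (j == k)).

Lemma ccoord_cclear u k j : ccoord (cclear u k) j = ccoord u j - (j == k).
Proof.
by rewrite /ccoord /cclear coord_grid_of //; move: (ccoord_lt u j); rewrite /ccoord; lia.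
Qed.

Lemma csucc_cclear u k : ccoord u k = 1 -> csucc (cclear u k) k = u.
Proof.
move=> h; apply: cube_ext => j.
have h0 : ccoord (cclear u k) k = 0 by rewrite ccoord_cclear h eqxx.
rewrite (ccoord_csucc _ h0) ccoord_cclear.
by case: (eqVneq j k) => [->|_]; rewrite ?h // subn0 addn0.
Qed.

Definition cweight (u : cube d) := \sum_j ccoord u j.

Lemma cweight_eq0 u : cweight u = 0 -> u = cube0.
Proof.
move/eqP; rewrite /cweight sum_nat_eq0 => /forallP h.
by apply: cube_ext => j; rewrite ccoord0; apply/eqP/h.
Qed.

Lemma cweight_gt0 u : 0 < cweight u -> exists j, ccoord u j = 1.
Proof.
move=> h; have /existsP [j /eqP hj] : [exists j, ccoord u j == 1]; last by exists j.
apply: contraTT h; rewrite negb_exists => /forallP h.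
rewrite -leqNgt leqn0 /cweight; apply/eqP/big1 => j _.
by move: (h j) (ccoord_lt u j) => /eqP; lia.
Qed.

Lemma cweight_cclear u k : ccoord u k = 1 -> cweight (cclear u k) < cweight u.
Proof.
move=> h; rewrite /cweight (bigD1 k) //= [X in _ < X](bigD1 k) //= ccoord_cclear h eqxx /=.
rewrite (eq_bigr (ccoord u)) ?subnn //.
by move=> j hj; rewrite ccoord_cclear (negbTE hj) subn0.
Qed.

Lemma cube_ind (P : cube d -> Prop) :
  P cube0 -> (forall u k, ccoord u k = 0 -> P u -> P (csucc u k)) -> forall u, P u.
Proof.
move=> P0 PS u; elim: {u}(cweight u) {-2}u (leqnn (cweight u)) => [|w IH] u hw.
  by move: hw; rewrite leqn0 => /eqP /cweight_eq0 ->.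
case: (posnP (cweight u)) => [/cweight_eq0 -> //|/cweight_gt0 [k hk]].
rewrite -(csucc_cclear hk); apply: PS; first by rewrite ccoord_cclear hk eqxx.
by apply: IH; move: (cweight_cclear hk); lia.
Qed.

End CubeInduction.

Section Boxes.
Variables (n : nat -> nat) (d : nat).
Local Notation G := (grid n d).

Definition box_corner (b : G) := forall j, coord b j + 1 < n j.

Definition box (b : G) (u : cube d) : G := grid_of b (fun j => coord b j + ccoord u j).

Lemma coord_box b u j : box_corner b -> coord (box b u) j = coord b j + ccoord u j.
Proof. by move=> hb; rewrite coord_grid_of //; move: (hb j) (ccoord_lt u j); lia. Qed.

Lemma gstep_box b u v a s : box_corner b ->
  gstep (box b u) (box b v) a s <-> @gstep (fun _ => 2) d u v a s.
Proof. by move=> hb; split => h j; move: (h j); rewrite !coord_box //; rewrite /ccoord; lia. Qed.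

Lemma box_inj b : box_corner b -> injective (box b).
Proof.
move=> hb u v e; apply: cube_ext => j.
by have := congr1 (fun x => coord x j) e; rewrite /= !coord_box //; lia.
Qed.

Lemma box_adj b u v : box_corner b -> gadj (box b u) (box b v) <-> cadj u v.
Proof.
move=> hb; rewrite /cadj !gadjP.
by split=> -[a [s h]]; exists a, s; apply/(gstep_box _ _ _ _ hb).
Qed.

Lemma box_embedding b : box_corner b -> embedding (@cadj d) (@gadj n d) (box b).
Proof. by move=> hb; split; [exact: box_inj | move=> u v /(box_adj _ _ hb)]. Qed.

Lemma big_box_edges (F : {set G} -> nat) b :
  \sum_(E in edges (@cadj d)) F (box b @: E) =
  \sum_(k < d) \sum_(u : cube d | ccoord u k == 0) F [set box b u; box b (csucc u k)].
Proof.
rewrite /cadj big_grid_edges; apply: eq_bigr => k _.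
apply: eq_big => [u|u _]; last by rewrite imsetU1 imset_set1.
by move: (ccoord_lt u k); rewrite /ccoord; lia.
Qed.

End Boxes.

(** * Copies of the cube are boxes *)

Section CubeEmbedding.
Variables (n : nat -> nat) (d : nat).
Local Notation G := (grid n d).
Variable phi : cube d -> G.
Hypothesis phi_inj : injective phi.
Hypothesis phi_adj : forall u v, cadj u v -> gadj (phi u) (phi v).

Local Notation Z := (cube0 d).

Lemma gstep_image u k : ccoord u k = 0 -> exists a s, gstep (phi u) (phi (csucc u k)) a s.
Proof. by move=> h; apply/gadjP/phi_adj/cadj_csucc. Qed.

Lemma image_square w i j a s c t : ccoord w i = 0 -> ccoord w j = 0 -> i != j ->
  gstep (phi w) (phi (csucc w i)) a s -> gstep (phi w) (phi (csucc w j)) c t ->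
  gstep (phi (csucc w j)) (phi (csucc (csucc w j) i)) a s /\ a != c.
Proof.
move=> hi hj hij h01 h03.
have hij0 : ccoord (csucc w i) j = 0 by rewrite ccoord_csucc // eq_sym (negbTE hij) addn0.
have hji0 : ccoord (csucc w j) i = 0 by rewrite ccoord_csucc // (negbTE hij) addn0.
have [b [r h12]] := gstep_image hij0.
have [e [v h32]] := gstep_image hji0.
have h32' := h32; rewrite -csuccC // in h32'.
have n02 : phi w != phi (csucc (csucc w i) j).
  apply/eqP => /phi_inj /(congr1 (fun u => ccoord u i)).
  by rewrite (ccoord_csucc _ hij0) ccoord_csucc // eqxx; lia.
have n13 : phi (csucc w i) != phi (csucc w j).
  apply/eqP => /phi_inj /(congr1 (fun u => ccoord u i)).
  by rewrite !ccoord_csucc // eqxx (negbTE hij); lia.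
by have [eea evs nac] := gstep_square h01 h12 h03 h32' n02 n13; subst e v.
Qed.

Definition image_dir (i : 'I_d) : 'I_d * bool :=
  odflt (i, true) [pick p : 'I_d * bool | gstepb (phi Z) (phi (csucc Z i)) p.1 p.2].

Definition image_axis i := (image_dir i).1.
Definition image_sign i := (image_dir i).2.

Lemma image_dir0 i : gstep (phi Z) (phi (csucc Z i)) (image_axis i) (image_sign i).
Proof.
rewrite /image_axis /image_sign /image_dir; case: pickP => [p /gstepP //|h].
have [a [s hs]] := gstep_image (ccoord0 i).
by move: (h (a, s)) => /=; move/gstepP: hs => ->.
Qed.

(* Induction over the cube: the edge in direction i at csucc w j is opposite to the one at w
   in a 4-cycle of the cube, and [image_square] transports the step. *)
Lemma image_dirP u i : ccoord u i = 0 ->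
  gstep (phi u) (phi (csucc u i)) (image_axis i) (image_sign i).
Proof.
elim/cube_ind: u i => [i _ | w j hwj IH i]; first exact: image_dir0.
have [-> /= hwi|hij hwi] := eqVneq i j.
  by move: hwi; rewrite ccoord_csucc // eqxx hwj.
have {}hwi : ccoord w i = 0 by move: hwi; rewrite ccoord_csucc // (negbTE hij) addn0.
have [c [t h03]] := gstep_image hwj.
by case: (image_square hwi hwj hij (IH i hwi) h03).
Qed.

Lemma image_axis_inj : injective image_axis.
Proof.
move=> i j e; apply/eqP; apply: contraTT isT => hij.
have [_] := image_square (ccoord0 i) (ccoord0 j) hij (image_dir0 i) (image_dir0 j).
by rewrite e eqxx.
Qed.

Definition axis_preimage (a : 'I_d) : 'I_d := invF image_axis_inj a.

Lemma axis_preimageK a : image_axis (axis_preimage a) = a.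
Proof. exact: f_invF. Qed.

Lemma image_axisK i : axis_preimage (image_axis i) = i.
Proof. exact: invF_f. Qed.

Lemma coord_image u a :
  coord (phi u) a + ((ccoord u (axis_preimage a) == 1) && ~~ image_sign (axis_preimage a)) =
  coord (phi Z) a + ((ccoord u (axis_preimage a) == 1) && image_sign (axis_preimage a)).
Proof.
elim/cube_ind: u a => [a | w j hwj IH a]; first by rewrite ccoord0.
move: (image_dirP hwj a) (IH a).
rewrite ccoord_csucc //; case: (eqVneq a (image_axis j)) => [->|na].
  by rewrite image_axisK hwj eqxx /=; case: (image_sign j) => /=; lia.
have nj : axis_preimage a != j by apply: contraNneq na => <-; rewrite axis_preimageK.
by rewrite (negbTE nj) addn0 /=; lia.
Qed.

Lemma image_unit_step a :
  coord (phi (csucc Z (axis_preimage a))) a + ~~ image_sign (axis_preimage a) =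
  coord (phi Z) a + image_sign (axis_preimage a).
Proof. by have := gstep_axis (image_dir0 (axis_preimage a)); rewrite axis_preimageK. Qed.

Definition image_corner : G :=
  grid_of (phi Z) (fun a => if image_sign (axis_preimage a) then coord (phi Z) a
                            else (coord (phi Z) a).-1).

Lemma coord_image_corner a : coord image_corner a =
  if image_sign (axis_preimage a) then coord (phi Z) a else (coord (phi Z) a).-1.
Proof.
by rewrite coord_grid_of //; have := coord_lt (phi Z) a; case: (image_sign _) => //; lia.
Qed.

Lemma image_corner_box : box_corner image_corner.
Proof.
move=> a; rewrite coord_image_corner; have := image_unit_step a.
have := coord_lt (phi (csucc Z (axis_preimage a))) a; have := coord_lt (phi Z) a.
by case: (image_sign _) => /=; lia.
Qed.

(* The symmetry of the cube giving the position of phi u in the box. *)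
Definition relabel (u : cube d) : cube d :=
  @grid_of (fun _ => 2) d Z (fun a => if image_sign (axis_preimage a)
    then ccoord u (axis_preimage a) else 1 - ccoord u (axis_preimage a)).

Lemma ccoord_relabel u a : ccoord (relabel u) a =
  if image_sign (axis_preimage a) then ccoord u (axis_preimage a)
  else 1 - ccoord u (axis_preimage a).
Proof.
rewrite /ccoord /relabel coord_grid_of //.
by have := ccoord_lt u (axis_preimage a); rewrite /ccoord; case: (image_sign _); lia.
Qed.

Lemma image_box u : phi u = box image_corner (relabel u).
Proof.
apply: grid_ext => a; rewrite coord_box; last exact: image_corner_box.
rewrite coord_image_corner ccoord_relabel.
have := coord_image u a; have := image_unit_step a; have := ccoord_lt u (axis_preimage a).
by case: (image_sign _) => /=; case: (ccoord u (axis_preimage a)) => [|[|]] //=; lia.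
Qed.

Lemma relabel_inj : injective relabel.
Proof. by move=> u v e; apply: phi_inj; rewrite !image_box e. Qed.

Lemma relabel_adj u v : cadj u v -> cadj (relabel u) (relabel v).
Proof. by move=> /phi_adj; rewrite !image_box => /(box_adj _ _ image_corner_box). Qed.

Lemma imset_relabel_edges :
  (fun E : {set cube d} => relabel @: E) @: edges (@cadj d) = edges (@cadj d).
Proof.
apply/eqP; rewrite eqEcard card_in_imset; last by move=> ? ? _ _; apply/imset_inj/relabel_inj.
rewrite leqnn andbT; apply/subsetP => F' /imsetP [E' /grid_edgesP [u [v [k [h ->]]]] ->].
rewrite imsetU1 imset_set1 /edges inE; apply/existsP; exists (relabel u).
apply/existsP; exists (relabel v); rewrite eqxx andbT.
by apply: relabel_adj; apply/gadjP; exists k, true.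
Qed.

End CubeEmbedding.

(* Every copy of Q_d in a grid is the unit box at some corner, with its vertices relabelled
   by a symmetry of the cube; so edge sums over copies of Q_d reduce to edge sums over boxes. *)
Lemma big_embedding_edges_box n d (phi : cube d -> grid n d) (F : {set grid n d} -> nat) :
  embedding (@cadj d) (@gadj n d) phi ->
  exists2 b, box_corner b &
    \sum_(E in edges (@cadj d)) F (phi @: E) = \sum_(E in edges (@cadj d)) F (box b @: E).
Proof.
case=> phi_inj phi_adj; exists (image_corner phi_inj phi_adj); first exact: image_corner_box.
set b := image_corner _ _; set t := relabel phi_inj phi_adj.
have phiE (E : {set cube d}) : phi @: E = box b @: (t @: E).
  by rewrite -imset_comp; apply: eq_imset => u; apply: image_box.
rewrite -{2}(imset_relabel_edges phi_inj phi_adj) big_imset /=.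
  by apply: eq_bigr => E _; rewrite phiE.
by move=> ? ? _ _; apply/imset_inj/relabel_inj.
Qed.

(** * The last coordinate *)

Lemma xcE n d (x : grid n d) (i : 'I_d) : xc x i = (coord x i).+1.
Proof.
rewrite /xc; case: insubP => [i' _ hi|]; last by rewrite ltn_ord.
by have -> : i' = i by apply: val_inj.
Qed.

Lemma xcN n d (x : grid n d) j (hj : j < d) : xc x j = (coord x (Ordinal hj)).+1.
Proof. exact: (xcE x (Ordinal hj)). Qed.

Section LastCoordinate.
Variables (n : nat -> nat) (m : nat).

Definition coordn (x : grid n m) (j : nat) := (xc x j).-1.

Lemma coordnE x (i : 'I_m) : coordn x i = coord x i.
Proof. by rewrite /coordn xcE. Qed.

Lemma coord_restr (x : grid n m.+1) (j : 'I_m) :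
  coord (restr x) j = coord x (widen_ord (leqnSn m) j).
Proof. by rewrite /coord /restr ffunE. Qed.

Lemma xc_restr (x : grid n m.+1) j : j < m -> xc (restr x) j = xc x j.
Proof.
move=> hj; rewrite (xcN _ hj) coord_restr.
by rewrite -[X in _ = xc x X]/(nat_of_ord (widen_ord (leqnSn m) (Ordinal hj))) xcE.
Qed.

Lemma sum_xc_restr (x : grid n m.+1) L : L <= m ->
  \sum_(0 <= j < L) xc x j = \sum_(0 <= j < L) xc (restr x) j.
Proof. by move=> hL; apply: eq_big_nat => j /andP [_ hj]; rewrite xc_restr //; lia. Qed.

Lemma xc_max (x : grid n m.+1) : xc x m = (coord x ord_max).+1.
Proof. exact: (xcE x ord_max). Qed.

Lemma restr_last_inj (x1 x2 : grid n m.+1) :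
  restr x1 = restr x2 -> coord x1 ord_max = coord x2 ord_max -> x1 = x2.
Proof.
move=> e1 e2; apply: grid_ext => a; case: (ltnP a m) => ha.
  have := congr1 (fun x => coord x (Ordinal ha)) e1; rewrite /= !coord_restr.
  by have -> : widen_ord (leqnSn m) (Ordinal ha) = a by apply: val_inj.
by have -> : a = ord_max by apply: val_inj => /=; have := ltn_ord a; lia.
Qed.

Lemma gstep_restr (x y : grid n m.+1) (k : 'I_m.+1) (hk : k < m) :
  gstep x y k true -> gstep (restr x) (restr y) (Ordinal hk) true.
Proof.
move=> h j; rewrite !coord_restr; move: (h (widen_ord (leqnSn m) j)).
by have -> : (widen_ord (leqnSn m) j == k) = (j == Ordinal hk).
Qed.

Lemma restr_edge (x y : grid n m.+1) (k : 'I_m.+1) : k < m -> gstep x y k true ->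
  [set restr x; restr y] \in edges (@gadj n m).
Proof.
move=> hk h; apply/grid_edgesP; exists (restr x), (restr y), (Ordinal hk).
by split => //; apply: gstep_restr.
Qed.

Variable dflt : grid n m.+1.

Definition gext (x : grid n m) (t : 'I_(n m)) : grid n m.+1 :=
  grid_of dflt (fun a => if a < m then coordn x a else t).

Lemma coord_gext x t (a : 'I_m.+1) : coord (gext x t) a = if a < m then coordn x a else t.
Proof.
rewrite coord_grid_of //; case: ifP => h.
  by rewrite -[nat_of_ord a]/(nat_of_ord (Ordinal h)) coordnE -[n a]/(n (Ordinal h)) coord_lt.
by have -> : nat_of_ord a = m by move: (ltn_ord a) h; lia.
Qed.

Lemma restr_gext x t : restr (gext x t) = x.
Proof.
apply: grid_ext => j; rewrite coord_restr coord_gext /= ltn_ord.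
rewrite -[nat_of_ord j]/(nat_of_ord (widen_ord (leqnSn m) j)) coordnE.
by congr coord; apply: val_inj.
Qed.

Lemma coord_gext_max x t : coord (gext x t) ord_max = t.
Proof. by rewrite coord_gext /= ltnn. Qed.

Lemma gext_restr (y : grid n m.+1) : gext (restr y) (y ord_max) = y.
Proof. by apply: restr_last_inj; rewrite ?restr_gext ?coord_gext_max. Qed.

Lemma big_gext (F : grid n m.+1 -> nat) :
  \sum_(y : grid n m.+1) F y = \sum_(t : 'I_(n m)) \sum_(x : grid n m) F (gext x t).
Proof.
rewrite pair_big /= (reindex (fun p : 'I_(n m) * grid n m => gext p.2 p.1)) //.
exists (fun y : grid n m.+1 => ((y ord_max : 'I_(n m)), restr y)) => [[t x] _|y _] /=.
  by rewrite restr_gext; congr pair; apply: val_inj; exact: coord_gext_max.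
exact: gext_restr.
Qed.

End LastCoordinate.

Section CubeLastCoordinate.
Variable m : nat.

Definition cext (u : cube m) (t : 'I_2) : cube m.+1 := @gext (fun _ => 2) m (cube0 m.+1) u t.

Lemma restr_cext u t : restr (cext u t) = u.
Proof. exact: restr_gext. Qed.

Lemma ccoord_cext_max u t : ccoord (cext u t) ord_max = t.
Proof. exact: coord_gext_max. Qed.

Lemma ccoord_cext u t (k : 'I_m) : ccoord (cext u t) (widen_ord (leqnSn m) k) = ccoord u k.
Proof. by rewrite /ccoord /cext coord_gext /= ltn_ord coordnE. Qed.

Lemma ccoord_restr (u : cube m.+1) j : ccoord (restr u) j = ccoord u (widen_ord (leqnSn m) j).
Proof. exact: coord_restr. Qed.

Lemma big_cube_succ (F : cube m.+1 -> nat) :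
  \sum_(u : cube m.+1) F u = \sum_(u : cube m) (F (cext u ord0) + F (cext u ord_max)).
Proof.
rewrite (@big_gext (fun _ => 2) m (cube0 m.+1)) /= big_ord_recr big_ord_recr big_ord0 /=.
by rewrite add0n -big_split.
Qed.

Lemma restr_csucc (u : cube m.+1) (k : 'I_m) : ccoord u (widen_ord (leqnSn m) k) = 0 ->
  restr (csucc u (widen_ord (leqnSn m) k)) = csucc (restr u) k.
Proof.
move=> h; apply: cube_ext => j.
by rewrite ccoord_restr !ccoord_csucc ?ccoord_restr.
Qed.

End CubeLastCoordinate.

Lemma box_corner_restr n m (b : grid n m.+1) : box_corner b -> box_corner (restr b).
Proof. by move=> hb j; rewrite coord_restr; apply: hb. Qed.

Lemma restr_box n m (b : grid n m.+1) u : box_corner b ->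
  restr (box b u) = box (restr b) (restr u).
Proof.
move=> hb; have hb' := box_corner_restr hb.
apply: grid_ext => j; rewrite coord_restr !coord_box //.
by rewrite coord_restr ccoord_restr.
Qed.

Section CubeFlip.
Variable d : nat.

Definition cflip (u : cube d) (i0 : 'I_d) : cube d :=
  @grid_of (fun _ => 2) d u (fun j => if j == i0 then 1 - ccoord u j else ccoord u j).

Lemma ccoord_cflip u i0 j : ccoord (cflip u i0) j = if j == i0 then 1 - ccoord u j else ccoord u j.
Proof.
rewrite /ccoord /cflip coord_grid_of //.
by have := ccoord_lt u j; rewrite /ccoord; case: (_ == _); lia.
Qed.

Lemma cflipK i0 : involutive (cflip ^~ i0).
Proof.
move=> u; apply: cube_ext => j; rewrite !ccoord_cflip.
by case: (_ == _) => //; have := ccoord_lt u j; lia.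
Qed.

Lemma double_sum_flip_parity (i0 : 'I_d) (P par : pred (cube d)) A B :
  (forall u, P (cflip u i0) = P u) -> (forall u, par (cflip u i0) = ~~ par u) ->
  2 * \sum_(u | P u) (if par u then A else B) = (\sum_(u | P u) 1) * (A + B).
Proof.
move=> hP hpar.
have e : \sum_(u | P u) (if par u then A else B) = \sum_(u | P u) (if par u then B else A).
  rewrite (reindex_inj (inv_inj (cflipK i0))); apply: eq_big => u; first by rewrite hP.
  by rewrite hpar; case: (par u).
rewrite mul2n -addnn {2}e -big_split big_distrl /=; apply: eq_bigr => u _.
by rewrite mul1n; case: (par u); rewrite // addnC.
Qed.

Lemma sum1_cube : \sum_(u : cube d) 1 = 2 ^ d.
Proof. by rewrite sum1_card card_ffun card_ord card_ord. Qed.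

Lemma sum1_cube_coord0 (k : 'I_d) : 2 * (\sum_(u : cube d | ccoord u k == 0) 1) = 2 ^ d.
Proof.
rewrite big_mkcond (double_sum_flip_parity (i0 := k) (P := xpredT)) //= ?sum1_cube ?muln1 //.
by move=> u; rewrite ccoord_cflip eqxx; have := ccoord_lt u k; case: (ccoord u k) => [|[|]].
Qed.

End CubeFlip.

Lemma odd_parity_swap A B c : A + 2 * c = B + 1 -> odd A = ~~ odd B.
Proof. by rewrite mul2n addn1 => /(congr1 odd); rewrite oddD odd_double oddS addbF. Qed.

Lemma odd_sum_xc_cflip n m (b : grid n m) (u : cube m) (i0 : 'I_m) L :
  box_corner b -> L <= m -> i0 < L ->
  odd (\sum_(0 <= j < L) xc (box b (cflip u i0)) j) =
  ~~ odd (\sum_(0 <= j < L) xc (box b u) j).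
Proof.
move=> hb hL hi; apply: (@odd_parity_swap _ _ (ccoord u i0)).
have hr : nat_of_ord i0 \in index_iota 0 L by rewrite /index_iota mem_iota; lia.
rewrite !(bigD1_seq (nat_of_ord i0) hr (iota_uniq _ _)) /= !xcE !coord_box // ccoord_cflip eqxx.
have -> : \sum_(i <- index_iota 0 L | i != i0) xc (box b (cflip u i0)) i =
          \sum_(i <- index_iota 0 L | i != i0) xc (box b u) i.
  rewrite big_seq_cond [RHS]big_seq_cond; apply: eq_bigr => j /andP [].
  rewrite mem_iota /= => hj hji; have hjm : j < m by lia.
  rewrite !(xcN _ hjm) !coord_box // ccoord_cflip.
  by case: eqP => // e; move: hji; rewrite -e eqxx.
by have := ccoord_lt u i0; lia.
Qed.

Lemma double_sum_box_parity n m (b : grid n m) (P : pred (cube m)) (i0 : 'I_m) L A B :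
  box_corner b -> L <= m -> i0 < L -> (forall u, P (cflip u i0) = P u) ->
  2 * \sum_(u | P u) (if odd (\sum_(0 <= j < L) xc (box b u) j) then A else B) =
  (\sum_(u | P u) 1) * (A + B).
Proof.
move=> hb hL hi hP; apply: double_sum_flip_parity hP _ => u.
exact: odd_sum_xc_cflip.
Qed.

Lemma sum_alternate p X Y : \sum_(0 <= k < p.*2) (if odd k.+1 then X else Y) = p * (X + Y).
Proof.
elim: p => [|p IH]; first by rewrite big_geq.
by rewrite doubleS big_nat_recr // big_nat_recr //= IH odd_double /=; lia.
Qed.

Lemma sum_alternate_tail m X Y Z : 2 * Z = X + Y ->
  2 * \sum_(k < m) (if odd m.+1 || (k.+1 <= m.-1) then (if odd k.+1 then X else Y) else Z)
  = m * (X + Y).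
Proof.
move=> hZ; rewrite -(big_mkord xpredT (fun k => if odd m.+1 || (k.+1 <= m.-1)
  then (if odd k.+1 then X else Y) else Z)).
have hm := odd_double_half m; set p := m./2 in hm.
case: (odd m) hm => /= hm; rewrite -hm.
- rewrite add1n big_nat_recr //= !negbK odd_double ltnn /=.
  have -> : \sum_(0 <= i < p.*2) (if i < p.*2 then (if ~~ odd i then X else Y) else Z)
          = p * (X + Y).
    by rewrite -sum_alternate; apply: eq_big_nat => i /andP [_ ->].
  lia.
- rewrite add0n /= odd_double /=.
  have -> : \sum_(0 <= i < p.*2) (if ~~ odd i then X else Y) = p * (X + Y).
    by rewrite -sum_alternate.
  lia.
Qed.

Lemma mixed_radix_inj N a1 c1 a2 c2 : 1 <= a1 <= N -> 1 <= a2 <= N ->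
  a1 + c1 * N = a2 + c2 * N -> a1 = a2 /\ c1 = c2.
Proof.
move=> h1 h2 e; have [lt|gt|eq] := ltngtP c1 c2; last by subst; lia.
- have : c1.+1 * N <= c2 * N by rewrite leq_mul2r lt orbT.
  rewrite mulSn; lia.
- have : c2.+1 * N <= c1 * N by rewrite leq_mul2r gt orbT.
  rewrite mulSn; lia.
Qed.

Lemma sum_ord_but_last p c : \sum_(t < p) (if t + 1 < p then c else 0) = (p - 1) * c.
Proof.
case: p => [|p]; first by rewrite big_ord0.
rewrite big_ord_recr /= addn1 ltnn addn0 subSS subn0.
rewrite (eq_bigr (fun _ => c)) => [|i _]; last by rewrite /= addn1 ltnS ltn_ord.
by rewrite big_const_ord iter_addn_0 mulnC.
Qed.

(** * The labeling *)

Section Labeling.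
Variables (m : nat) (n : nat -> nat).
Hypothesis hd : 3 <= m.+1.
Hypothesis hmono : forall i j, i <= j -> j < m.+1 -> n j <= n i.
Hypothesis hlast : 2 <= n m.
Variables (ft : grid n m -> nat) (S : nat).
Hypothesis hft : vmagic (@cadj m) (@gadj n m) ft S.
Variables (gt : {set grid n m} -> nat) (S' : nat).
Hypothesis hgt : emagic (@cadj m) (@gadj n m) gt S'.
Variable g : {set grid n m.+1} -> nat.

Local Notation N := #|grid n m|.
Local Notation M := #|edges (@gadj n m)|.

Definition label_rule (x y : grid n m.+1) (k : 'I_m.+1) :=
  if val k == m then
    (if odd (\sum_(0 <= j < m) xc x j)
     then ft (restr x) + n m * M + (xc x m - 1) * N
     else ft (restr x) + n m * M + (n m - 1 - xc x m) * N)
  else if odd m.+1 || (k.+1 <= m.-1) then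
    (if odd k.+1
     then gt [set restr x; restr y] + (xc x m - 1) * M
     else gt [set restr x; restr y] + (n m - xc x m) * M)
  else
    (if odd (\sum_(0 <= j < m.-1) xc x j)
     then gt [set restr x; restr y] + (xc x m - 1) * M
     else gt [set restr x; restr y] + (n m - xc x m) * M).

Hypothesis hg : forall (x y : grid n m.+1) (k : 'I_m.+1),
  (forall j : 'I_m.+1, (y j : nat) = x j + (j == k)) -> g [set x; y] = label_rule x y k.

Lemma g_step x y k : gstep x y k true -> g [set x; y] = label_rule x y k.
Proof. by move=> h; apply: hg => j; move: (h j); rewrite andbF andbT addn0. Qed.

Lemma ft_range v : 1 <= ft v <= N.
Proof. by case: hft => [[_ h] _]. Qed.

Lemma ft_inj : injective ft.
Proof. by case: hft => [[h _] _]. Qed.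

Lemma gt_range E : E \in edges (@gadj n m) -> 1 <= gt E <= M.
Proof. by case: hgt => [[_ h] _]; apply: h. Qed.

Lemma gt_inj : {in edges (@gadj n m) &, injective gt}.
Proof. by case: hgt => [[h _] _]. Qed.

(* Vertical edges (along the last axis) get labels in (n_d M, n_d M + (n_d - 1) N],
   horizontal ones labels in [1, n_d M]; [vlevel] and [hlevel] are the multipliers
   of N and M in the rule. *)
Definition vlevel (x : grid n m.+1) :=
  if odd (\sum_(0 <= j < m) xc (restr x) j) then xc x m - 1 else n m - 1 - xc x m.

Definition hlevel (x : grid n m.+1) (k : 'I_m.+1) :=
  if odd m.+1 || (k.+1 <= m.-1) then
    (if odd k.+1 then xc x m - 1 else n m - xc x m)
  else (if odd (\sum_(0 <= j < m.-1) xc (restr x) j) then xc x m - 1 else n m - xc x m).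

Lemma g_vertical x y : gstep x y ord_max true ->
  g [set x; y] = ft (restr x) + n m * M + vlevel x * N.
Proof.
by move=> h; rewrite (g_step h) /label_rule /= eqxx (@sum_xc_restr _ _ x m) // /vlevel; case: ifP.
Qed.

Lemma g_horizontal x y (k : 'I_m.+1) : k < m -> gstep x y k true ->
  g [set x; y] = gt [set restr x; restr y] + hlevel x k * M.
Proof.
move=> hk h; rewrite (g_step h) /label_rule /hlevel.
have -> : (val k == m) = false by apply/negbTE; rewrite neq_ltn hk.
by rewrite (@sum_xc_restr _ _ x m.-1); [case: ifP => _; case: ifP | lia].
Qed.

Lemma vlevel_le x y : gstep x y ord_max true -> vlevel x <= n m - 2.
Proof. by move=> /gstep_lt; rewrite /vlevel xc_max /=; case: ifP => _; lia. Qed.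

Lemma hlevel_le x k : hlevel x k <= n m - 1.
Proof. by have := coord_lt x ord_max; rewrite /hlevel xc_max /=; do 2!case: ifP => _; lia. Qed.

Lemma vlevel_inj x1 x2 : restr x1 = restr x2 -> vlevel x1 = vlevel x2 ->
  coord x1 ord_max + 1 < n m -> coord x2 ord_max + 1 < n m -> coord x1 ord_max = coord x2 ord_max.
Proof. by move=> e; rewrite /vlevel e !xc_max /=; case: ifP => _; lia. Qed.

Lemma hlevel_inj x1 x2 k : restr x1 = restr x2 -> hlevel x1 k = hlevel x2 k ->
  coord x1 ord_max = coord x2 ord_max.
Proof.
move=> e; have := coord_lt x1 ord_max; have := coord_lt x2 ord_max.
by rewrite /hlevel e !xc_max /=; do 2!case: ifP => _; lia.
Qed.

Lemma g_horizontal_range x y (k : 'I_m.+1) : k < m -> gstep x y k true ->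
  1 <= g [set x; y] <= n m * M.
Proof.
move=> hk h; rewrite (g_horizontal hk h).
have := gt_range (restr_edge hk h).
have : hlevel x k * M <= (n m - 1) * M by rewrite leq_mul2r hlevel_le orbT.
have : (n m - 1) * M + M = n m * M by nia.
lia.
Qed.

Lemma g_vertical_range x y : gstep x y ord_max true ->
  n m * M < g [set x; y] <= n m * M + (n m - 1) * N.
Proof.
move=> h; rewrite (g_vertical h).
have := ft_range (restr x).
have : vlevel x * N <= (n m - 2) * N by rewrite leq_mul2r (vlevel_le h) orbT.
have : (n m - 2) * N + N = (n m - 1) * N by nia.
lia.
Qed.

Lemma ord_max_ge (k : 'I_m.+1) : m <= k -> k = ord_max.
Proof. by move=> hk; apply: val_inj => /=; have := ltn_ord k; lia. Qed.

Lemma g_inj_horizontal x1 y1 (k1 : 'I_m.+1) x2 y2 (k2 : 'I_m.+1) : k1 < m -> k2 < m ->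
  gstep x1 y1 k1 true -> gstep x2 y2 k2 true ->
  g [set x1; y1] = g [set x2; y2] -> x1 = x2 /\ k1 = k2.
Proof.
move=> hk1 hk2 h1 h2; rewrite (g_horizontal hk1 h1) (g_horizontal hk2 h2) => e.
have [eg el] := mixed_radix_inj (gt_range (restr_edge hk1 h1)) (gt_range (restr_edge hk2 h2)) e.
have [er _ ek] := grid_edge_inj (gstep_restr hk1 h1) (gstep_restr hk2 h2)
  (gt_inj (restr_edge hk1 h1) (restr_edge hk2 h2) eg).
have {}ek : k1 = k2 by apply: val_inj; move: (congr1 val ek).
by subst k2; split => //; apply: restr_last_inj er (hlevel_inj er el).
Qed.

Lemma g_inj_vertical x1 y1 x2 y2 : gstep x1 y1 ord_max true -> gstep x2 y2 ord_max true ->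
  g [set x1; y1] = g [set x2; y2] -> x1 = x2.
Proof.
move=> h1 h2; rewrite (g_vertical h1) (g_vertical h2) => e.
have [ef el] : ft (restr x1) = ft (restr x2) /\ vlevel x1 = vlevel x2.
  by apply: mixed_radix_inj (ft_range _) (ft_range _) _; lia.
have er := ft_inj ef.
by apply: restr_last_inj er (vlevel_inj er el (gstep_lt h1) (gstep_lt h2)).
Qed.

Lemma g_inj x1 y1 (k1 : 'I_m.+1) x2 y2 (k2 : 'I_m.+1) :
  gstep x1 y1 k1 true -> gstep x2 y2 k2 true ->
  g [set x1; y1] = g [set x2; y2] -> [set x1; y1] = [set x2; y2].
Proof.
move=> h1 h2 e.
suff [ex ek] : x1 = x2 /\ k1 = k2 by subst; rewrite (gstep_det h1 h2).
case: (ltnP k1 m) => hk1; case: (ltnP k2 m) => hk2.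
- exact: g_inj_horizontal hk1 hk2 h1 h2 e.
- rewrite (ord_max_ge hk2) in h2.
  by have := g_horizontal_range hk1 h1; have := g_vertical_range h2; rewrite e; lia.
- rewrite (ord_max_ge hk1) in h1.
  by have := g_horizontal_range hk2 h2; have := g_vertical_range h1; rewrite e; lia.
- rewrite (ord_max_ge hk1) (ord_max_ge hk2) in h1 h2 *.
  by split => //; apply: g_inj_vertical h1 h2 e.
Qed.

Lemma n_gt1 (a : 'I_m.+1) : 1 < n a.
Proof. by have := hmono (leq_ord a) (ltnSn m); lia. Qed.

Definition grid_origin : grid n m.+1 :=
  @finfun _ (fun a : 'I_m.+1 => 'I_(n a)) (fun a => Ordinal (ltnW (n_gt1 a))).

Lemma card_edges_grid_succ : #|edges (@gadj n m.+1)| = n m * M + (n m - 1) * N.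
Proof.
rewrite -sum1_card big_grid_edges big_ord_recr /=; congr (_ + _).
  rewrite -sum1_card big_grid_edges big_distrr /=; apply: eq_bigr => k _.
  rewrite big_mkcond (big_gext grid_origin) /=.
  rewrite (eq_bigr (fun _ => \sum_(x : grid n m | coord x k + 1 < n k) 1)); last first.
    move=> t _; rewrite [RHS]big_mkcond; apply: eq_bigr => x _.
    by rewrite coord_gext /= ltn_ord coordnE.
  by rewrite big_const_ord iter_addn_0 mulnC.
rewrite big_mkcond (big_gext grid_origin) /= -sum_ord_but_last; apply: eq_bigr => t _.
rewrite (eq_bigr (fun _ => if t + 1 < n m then 1 else 0)); last first.
  by move=> x _; rewrite coord_gext /= ltnn.
by case: ifP => _; rewrite ?sum1_card // big1.
Qed.

Lemma g_elabeling : elabeling (@gadj n m.+1) g.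
Proof.
split.
  move=> E1 E2 /grid_edgesP [x1 [y1 [k1 [h1 ->]]]] /grid_edgesP [x2 [y2 [k2 [h2 ->]]]].
  exact: g_inj h1 h2.
move=> E /grid_edgesP [x [y [k [h ->]]]]; rewrite card_edges_grid_succ.
case: (ltnP k m) => hk; first by have := g_horizontal_range hk h; lia.
by rewrite (ord_max_ge hk) in h; have := g_vertical_range h; lia.
Qed.

Section BoxSums.
Variable b : grid n m.+1.
Hypothesis hb : box_corner b.

Local Notation b' := (restr b).
Local Notation beta := (coord b ord_max).
Local Notation widen := (widen_ord (leqnSn m)).

Lemma xc_box_max u : xc (box b u) m = beta + ccoord u ord_max + 1.
Proof. by rewrite xc_max coord_box // addn1. Qed.

Lemma gstep_box_csucc u k : ccoord u k = 0 -> gstep (box b u) (box b (csucc u k)) k true.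
Proof. by move=> h; apply/(gstep_box _ _ _ _ hb); apply: gstep_csucc. Qed.

Lemma sum1_cube_half (k : 'I_m) : \sum_(u : cube m | ccoord u k == 0) 1 = 2 ^ m.-1.
Proof.
by apply/eqP; rewrite -(eqn_pmul2l (isT : 0 < 2)) sum1_cube_coord0 -expnS prednK //; lia.
Qed.

Lemma sum_box_vertical :
  \sum_(u : cube m.+1 | ccoord u ord_max == 0) g [set box b u; box b (csucc u ord_max)]
  = S + 2 ^ m * (n m * M) + 2 ^ m.-1 * (n m - 2) * N.
Proof.
have hbeta : beta + 1 < n m := hb ord_max.
have hm0 : 0 < m by lia.
pose par u := odd (\sum_(0 <= j < m) xc (box b' u) j).
rewrite big_mkcond big_cube_succ /=.
rewrite (eq_bigr (fun u => ft (box b' u) + n m * M + (if par u then beta else n m - 2 - beta) * N));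
  last first.
  move=> u _; rewrite !ccoord_cext_max /= addn0.
  rewrite (g_vertical (gstep_box_csucc (ccoord_cext_max u ord0))) /vlevel.
  rewrite restr_box // restr_cext xc_box_max ccoord_cext_max.
  by rewrite /par /=; case: ifP => _; congr (_ + _ * _); lia.
rewrite !big_split -!big_distrl /=.
have -> : \sum_(u : cube m) ft (box b' u) = S.
  by case: hft => _; apply; apply/box_embedding/box_corner_restr.
have -> : \sum_(u : cube m) n m = 2 ^ m * n m.
  by rewrite -sum1_cube big_distrl /=; apply: eq_bigr => u _; rewrite mul1n.
have -> : \sum_(u : cube m) (if par u then beta else n m - 2 - beta) = 2 ^ m.-1 * (n m - 2).
  apply/eqP; rewrite -(eqn_pmul2l (isT : 0 < 2)) mulnA -expnS prednK //.
  rewrite (double_sum_box_parity (i0 := Ordinal hm0)) ?sum1_cube //; last exact: box_corner_restr.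
  by apply/eqP; congr (_ * _); lia.
by rewrite mulnA mulnAC.
Qed.

(* [hlevel_box k u t] is the multiplier of M in the label of the edge along axis k at the
   vertex (u, t) of the box. *)
Definition hlevel_box (k : 'I_m) (u : cube m) (t : nat) :=
  if (if odd m.+1 || (k.+1 <= m.-1) then odd k.+1
      else odd (\sum_(0 <= j < m.-1) xc (box b' u) j))
  then beta + t else n m - (beta + t + 1).

Lemma sum_box_horizontal_axis (k : 'I_m) :
  \sum_(u : cube m.+1 | ccoord u (widen k) == 0) g [set box b u; box b (csucc u (widen k))] =
  \sum_(u : cube m | ccoord u k == 0)
     (2 * gt [set box b' u; box b' (csucc u k)] + (hlevel_box k u 0 + hlevel_box k u 1) * M).
Proof.
rewrite big_mkcond big_cube_succ [RHS]big_mkcond; apply: eq_bigr => u _.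
rewrite !ccoord_cext; case: ifP => // /eqP hu.
have hk : widen k < m by rewrite /= ltn_ord.
suff e (t : 'I_2) : g [set box b (cext u t); box b (csucc (cext u t) (widen k))]
   = gt [set box b' u; box b' (csucc u k)] + hlevel_box k u t * M by rewrite !e /=; lia.
have hut : ccoord (cext u t) (widen k) = 0 by rewrite ccoord_cext.
rewrite (g_horizontal hk (gstep_box_csucc hut)) !restr_box // restr_cext restr_csucc // restr_cext.
congr (_ + _ * _).
rewrite /hlevel /hlevel_box restr_box // restr_cext xc_box_max ccoord_cext_max /=.
by repeat case: ifP => _; lia.
Qed.

Definition hlevel_pair (k : 'I_m) :=
  if odd m.+1 || (k.+1 <= m.-1)
  then (if odd k.+1 then 2 * beta + 1 else 2 * n m - 2 * beta - 3)
  else n m - 1.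

(* When d is even the last horizontal axis uses the parity of x_1 + ... + x_{d-2}, which
   flipping x_1 changes; this is where d >= 3 is needed. *)
Lemma sum_hlevel_box (k : 'I_m) :
  \sum_(u : cube m | ccoord u k == 0) (hlevel_box k u 0 + hlevel_box k u 1)
  = 2 ^ m.-1 * hlevel_pair k.
Proof.
have hbeta : beta + 1 < n m := hb ord_max.
rewrite /hlevel_pair /hlevel_box; case hc: (odd m.+1 || (k.+1 <= m.-1)).
  rewrite (eq_bigr (fun _ => if odd k.+1 then 2 * beta + 1 else 2 * n m - 2 * beta - 3));
    last by move=> u _; case: ifP => _; lia.
  by rewrite -(sum1_cube_half k) big_distrl /=; apply: eq_bigr => u _; rewrite mul1n.
have hm0 : 0 < m by lia.
have hk0 : k != Ordinal hm0 by apply/eqP => e; move: hc; rewrite e /=; case: (odd m) => /=; lia.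
rewrite (eq_bigr (fun u => if odd (\sum_(0 <= j < m.-1) xc (box b' u) j)
    then 2 * beta + 1 else 2 * n m - 2 * beta - 3)); last by move=> u _; case: ifP => _; lia.
apply/eqP; rewrite -(eqn_pmul2l (isT : 0 < 2)); apply/eqP.
have hL : Ordinal hm0 < m.-1 by rewrite /=; lia.
rewrite (double_sum_box_parity _ _ (box_corner_restr hb) (leq_pred m) hL) ?sum1_cube_half;
  last by move=> u; rewrite ccoord_cflip (negbTE hk0).
have -> : 2 * beta + 1 + (2 * n m - 2 * beta - 3) = 2 * (n m - 1) by lia.
by rewrite mulnCA.
Qed.

Lemma sum_box_horizontal :
  \sum_(k < m) \sum_(u : cube m.+1 | ccoord u (widen k) == 0)
     g [set box b u; box b (csucc u (widen k))] =
  2 * S' + 2 ^ m.-1 * (m * (n m - 1)) * M.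
Proof.
have hbeta : beta + 1 < n m := hb ord_max.
rewrite (eq_bigr (fun k => 2 * \sum_(u : cube m | ccoord u k == 0)
   gt [set box b' u; box b' (csucc u k)] + (2 ^ m.-1 * hlevel_pair k) * M)); last first.
  move=> k _; rewrite sum_box_horizontal_axis big_split /= -big_distrr -big_distrl /=.
  by rewrite sum_hlevel_box.
rewrite big_split /= -big_distrr -big_distrl /= -big_distrr /=.
have -> : \sum_(k < m) \sum_(u : cube m | ccoord u k == 0) gt [set box b' u; box b' (csucc u k)]
    = S'.
  by case: hgt => _ h; rewrite -(h _ (box_embedding (box_corner_restr hb))) big_box_edges.
have -> : \sum_(k < m) hlevel_pair k = m * (n m - 1).
  apply/eqP; rewrite -(eqn_pmul2l (isT : 0 < 2)); apply/eqP.
  by rewrite /hlevel_pair (@sum_alternate_tail m _ _ (n m - 1)); lia.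
by rewrite mulnA.
Qed.

End BoxSums.

Lemma g_magic (phi : cube m.+1 -> grid n m.+1) : embedding (@cadj m.+1) (@gadj n m.+1) phi ->
  \sum_(E in edges (@cadj m.+1)) g (phi @: E) =
    S + 2 * S' + 2 ^ (m.+1 - 2) * (n m - 2) * N
       + 2 ^ (m.+1 - 2) * (2 * n m + m * (n m - 1)) * M.
Proof.
move=> emb; have [b hb ->] := big_embedding_edges_box g emb.
rewrite big_box_edges big_ord_recr /= sum_box_horizontal // sum_box_vertical //.
have -> : m.+1 - 2 = m.-1 by lia.
have -> : 2 ^ m = 2 * 2 ^ m.-1 by rewrite -expnS prednK //; lia.
set P := 2 ^ m.-1; set NN := #|grid n m|; set MM := #|edges _|.
by set a := n m - 1; set c := n m - 2; nia.
Qed.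

Lemma g_emagic : emagic (@cadj m.+1) (@gadj n m.+1) g
    (S + 2 * S' + 2 ^ (m.+1 - 2) * (n m - 2) * N
       + 2 ^ (m.+1 - 2) * (2 * n m + m * (n m - 1)) * M).
Proof. by split; [exact: g_elabeling | exact: g_magic]. Qed.

End Labeling.

Theorem lemma6 (m : nat) (n : nat -> nat)
  (hd : 3 <= m.+1)
  (hmono : forall i j, i <= j -> j < m.+1 -> n j <= n i)
  (hlast : 2 <= n m)
  (ft : grid n m -> nat) (S : nat)
  (hft : vmagic (@cadj m) (@gadj n m) ft S)
  (gt : {set grid n m} -> nat) (S' : nat)
  (hgt : emagic (@cadj m) (@gadj n m) gt S')
  (g : {set grid n m.+1} -> nat) :
  let N := #|grid n m| in
  let M := #|edges (@gadj n m)| in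
  (forall (x y : grid n m.+1) (k : 'I_m.+1),
     (forall j : 'I_m.+1, (y j : nat) = x j + (j == k)) ->
     g [set x; y] =
       if val k == m then
         (if odd (\sum_(0 <= j < m) xc x j)
          then ft (restr x) + n m * M + (xc x m - 1) * N
          else ft (restr x) + n m * M + (n m - 1 - xc x m) * N)
       else if odd m.+1 || (k.+1 <= m.-1) then
         (if odd k.+1
          then gt [set restr x; restr y] + (xc x m - 1) * M
          else gt [set restr x; restr y] + (n m - xc x m) * M)
       else
         (if odd (\sum_(0 <= j < m.-1) xc x j)
          then gt [set restr x; restr y] + (xc x m - 1) * M
          else gt [set restr x; restr y] + (n m - xc x m) * M)) ->
  emagic (@cadj m.+1) (@gadj n m.+1) g
    (S + 2 * S' + 2 ^ (m.+1 - 2) * (n m - 2) * N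
       + 2 ^ (m.+1 - 2) * (2 * n m + m * (n m - 1)) * M).
Proof. by move=> N M hg; exact: g_emagic hg. Qed.
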